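(* Let $q$ be a prime. For integers $a,b,m,\lambda$ with $\gcd(am\lambda,q)=1$ and a real number $N\geqslant 1$, define \[ U_{a,b,\lambda}(m,N)=\sum_{n\leqslant N}\ \sum_{\substack{x\in\{0,1,\ldots,q-1\}\\ x^2\equiv amn+b \bmod q}} \exp(2\pi i \lambda x/q), \] where $n$ runs over positive integers $n\leqslant N$. Then \[ U_{a,b,\lambda}(m,N)\ll q^{1/2}\log q, \] uniformly over all real $N\geqslant 1$ and all integers $a,b,m,\lambda$ with $\gcd(am\lambda,q)=1$.
   Context: $q$ is a (large) prime number and $\mathbb{F}_q$ is represented by $\{0,1,\ldots,q-1\}$. The notation $X\ll Y$ means $|X|\leqslant cY$ for an absolute constant $c>0$. *)

From Stdlib Require Import Reals ZArith List Znumtheory.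
From Coquelicot Require Import Coquelicot.
Open Scope R_scope.

Definition e (t : R) : C := (cos (2 * PI * t), sin (2 * PI * t)).

Definition Csum (l : list C) : C := fold_right Cplus (RtoC 0) l.

(* floor of N via Stdlib's Int_part (Int_part N = up N - 1 = floor N) *)
Definition n_range (N : R) : list nat := List.seq 1 (Z.to_nat (Int_part N)).

Definition x_range (q : Z) : list Z :=
  List.map Z.of_nat (List.seq 0 (Z.to_nat q)).

Definition U (q a b m lam : Z) (N : R) : C :=
  Csum (List.map (fun n : nat =>
    Csum (List.map (fun x : Z => e (IZR lam * IZR x / IZR q))
      (List.filter (fun x : Z =>
         Z.eqb (Z.modulo (x * x - (a * m * Z.of_nat n + b)) q) 0)
         (x_range q))))
    (n_range N)).

(* Detecting x^2 = amn + b (mod q) with additive characters and solving the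
   congruence for n (am is invertible mod q, with inverse v) completes the sum
   over n:  U = q^-1 sum_h S(h) G(h),  where  S(h) = sum_{n <= N} e_q(-hn)  is a
   geometric sum and  G(h) = sum_x e_q(hv x^2 + lam x - hvb)  a quadratic Gauss
   sum.  G(0) = 0 because q does not divide lam, |G(h)| <= 2 sqrt q otherwise,
   and |S(h)| <= 1/|sin(pi h/q)| <= q/h + q/(q-h); summing over h gives
   |U| <= 4 sqrt q (1 + log q). *)

From Stdlib Require Import Reals ZArith List Znumtheory Lra Lia.
From Coquelicot Require Import Coquelicot.
Open Scope R_scope.

Definition Rsum (l : list R) : R := fold_right Rplus 0 l.

Lemma Csum_map_zero {A : Type} (l : list A) : Csum (map (fun _ => RtoC 0) l) = 0.
Proof. induction l as [|x l IH]; simpl; [reflexivity | rewrite IH; ring]. Qed.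

Lemma Csum_app (l1 l2 : list C) : Csum (l1 ++ l2) = (Csum l1 + Csum l2)%C.
Proof. induction l1 as [|z l1 IH]; simpl; [ring | rewrite IH; ring]. Qed.

Lemma Csum_map_add {A : Type} (f g : A -> C) l :
  Csum (map (fun x => f x + g x)%C l) = (Csum (map f l) + Csum (map g l))%C.
Proof. induction l as [|x l IH]; simpl; [ring | rewrite IH; ring]. Qed.

Lemma Csum_map_mult_l {A : Type} (c : C) (f : A -> C) l :
  Csum (map (fun x => c * f x)%C l) = (c * Csum (map f l))%C.
Proof. induction l as [|x l IH]; simpl; [ring | rewrite IH; ring]. Qed.

Lemma Csum_map_mult_r {A : Type} (c : C) (f : A -> C) l :
  Csum (map (fun x => f x * c)%C l) = (Csum (map f l) * c)%C.
Proof. induction l as [|x l IH]; simpl; [ring | rewrite IH; ring]. Qed.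

Lemma Csum_map_const {A : Type} (c : C) (l : list A) :
  Csum (map (fun _ => c) l) = (INR (length l) * c)%C.
Proof.
  induction l as [|x l IH]; simpl length; simpl Csum.
  - simpl. ring.
  - rewrite IH, S_INR, RtoC_plus. ring.
Qed.

Lemma Csum_map_swap {A B : Type} (f : A -> B -> C) l1 l2 :
  Csum (map (fun x => Csum (map (f x) l2)) l1) =
  Csum (map (fun y => Csum (map (fun x => f x y) l1)) l2).
Proof.
  induction l1 as [|x l1 IH]; simpl.
  - symmetry; apply Csum_map_zero.
  - rewrite IH, <- Csum_map_add. reflexivity.
Qed.

Lemma Csum_map_mult_Csum {A B : Type} (f : A -> C) (g : B -> C) l1 l2 :
  (Csum (map f l1) * Csum (map g l2))%C =
  Csum (map (fun x => Csum (map (fun y => f x * g y) l2)) l1)%C.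
Proof.
  rewrite <- Csum_map_mult_r. f_equal. apply map_ext. intros x.
  symmetry; apply Csum_map_mult_l.
Qed.

Lemma Csum_map_filter {A : Type} (p : A -> bool) (f : A -> C) l :
  Csum (map f (filter p l)) = Csum (map (fun x => if p x then f x else 0) l).
Proof.
  induction l as [|x l IH]; simpl; [reflexivity|].
  destruct (p x); simpl; rewrite IH; [reflexivity | ring].
Qed.

Lemma Csum_conj (l : list C) : Cconj (Csum l) = Csum (map Cconj l).
Proof.
  induction l as [|z l IH]; simpl.
  - apply injective_projections; simpl; ring.
  - rewrite Cplus_conj, IH. reflexivity.
Qed.

Lemma Cmod_Csum_le (l : list C) : Cmod (Csum l) <= Rsum (map Cmod l).
Proof.
  induction l as [|z l IH]; simpl.
  - rewrite Cmod_0. lra.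
  - eapply Rle_trans; [apply Cmod_triangle | lra].
Qed.

Lemma Rsum_app (l1 l2 : list R) : Rsum (l1 ++ l2) = Rsum l1 + Rsum l2.
Proof. induction l1 as [|r l1 IH]; simpl; [ring | rewrite IH; ring]. Qed.

Lemma Rsum_map_add {A : Type} (f g : A -> R) l :
  Rsum (map (fun x => f x + g x) l) = Rsum (map f l) + Rsum (map g l).
Proof. induction l as [|x l IH]; simpl; [ring | rewrite IH; ring]. Qed.

Lemma Rsum_map_mult_l {A : Type} (c : R) (f : A -> R) l :
  Rsum (map (fun x => c * f x) l) = c * Rsum (map f l).
Proof. induction l as [|x l IH]; simpl; [ring | rewrite IH; ring]. Qed.

Lemma Rsum_map_const {A : Type} (c : R) (l : list A) :
  Rsum (map (fun _ => c) l) = INR (length l) * c.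
Proof.
  induction l as [|x l IH]; simpl length; simpl Rsum.
  - simpl. ring.
  - rewrite IH, S_INR. ring.
Qed.

Lemma Rsum_map_le {A : Type} (f g : A -> R) l :
  (forall x, In x l -> f x <= g x) -> Rsum (map f l) <= Rsum (map g l).
Proof.
  induction l as [|x l IH]; simpl; intros Hfg; [lra|].
  specialize (Hfg x (or_introl eq_refl)) as Hx.
  assert (Rsum (map f l) <= Rsum (map g l)) by (apply IH; auto). lra.
Qed.

Lemma e_add s t : e (s + t) = (e s * e t)%C.
Proof.
  unfold e, Cmult; simpl.
  replace (2 * PI * (s + t)) with (2 * PI * s + 2 * PI * t) by ring.
  rewrite cos_plus, sin_plus. f_equal; ring.
Qed.

Lemma e_opp t : e (- t) = Cconj (e t).
Proof.
  unfold e, Cconj; simpl.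
  replace (2 * PI * - t) with (- (2 * PI * t)) by ring.
  rewrite cos_neg, sin_neg. reflexivity.
Qed.

Lemma e_nat n : e (INR n) = 1.
Proof.
  unfold e. replace (2 * PI * INR n) with (0 + 2 * INR n * PI) by ring.
  rewrite cos_period, sin_period, cos_0, sin_0. reflexivity.
Qed.

Lemma e_int k : e (IZR k) = 1.
Proof.
  destruct (Z_le_gt_dec 0 k) as [Hk | Hk].
  - rewrite <- (Z2Nat.id k Hk), <- INR_IZR_INZ. apply e_nat.
  - replace k with (- Z.of_nat (Z.to_nat (- k)))%Z by lia.
    rewrite opp_IZR, <- INR_IZR_INZ, e_opp, e_nat.
    apply injective_projections; simpl; ring.
Qed.

Lemma Cmod_e t : Cmod (e t) = 1.
Proof.
  unfold Cmod, e; cbn [fst snd].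
  rewrite <- sqrt_1, <- (sin2_cos2 (2 * PI * t)). f_equal. unfold Rsqr. ring.
Qed.

Lemma Cmod_e_sub_1 t : Cmod (e t - 1) = 2 * Rabs (sin (PI * t)).
Proof.
  unfold Cmod, e; cbn [fst snd Cminus Cplus Copp RtoC].
  replace (2 * PI * t) with (2 * (PI * t)) by ring.
  rewrite cos_2a_sin, sin_2a.
  replace (_ ^ 2 + _ ^ 2) with (Rsqr (2 * sin (PI * t))).
  - rewrite sqrt_Rsqr_abs, Rabs_mult, (Rabs_right 2); lra.
  - pose proof (sin2_cos2 (PI * t)). unfold Rsqr in *. nra.
Qed.

Lemma ndvd_of_lt q x : (0 < x < q)%Z -> ~ (q | x)%Z.
Proof. intros Hx Hd. apply Z.divide_pos_le in Hd; lia. Qed.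

Lemma prime_ndvd_mul q m n : prime q -> ~ (q | m)%Z -> ~ (q | n)%Z -> ~ (q | m * n)%Z.
Proof. intros Hp Hm Hn Hd. apply prime_mult in Hd as [Hd | Hd]; auto. Qed.

Lemma ndvd_of_coprime q k d : (1 < q)%Z -> Z.gcd k q = 1%Z -> (d | k)%Z -> ~ (q | d)%Z.
Proof.
  intros Hq Hg Hd Hqd. apply (ndvd_of_lt q 1); [lia|].
  rewrite <- Hg. apply Z.gcd_greatest; [apply (Z.divide_trans _ d) | apply Z.divide_refl];
    assumption.
Qed.

Lemma exists_inverse_mod q c : prime q -> ~ (q | c)%Z -> exists v, (q | v * c - 1)%Z.
Proof.
  intros Hp Hc.
  destruct (rel_prime_bezout _ _ (prime_rel_prime q Hp c Hc)) as [u v Huv].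
  exists v, (- u)%Z. lia.
Qed.

Lemma inverse_mod_ndvd q c v : (1 < q)%Z -> (q | v * c - 1)%Z -> ~ (q | v)%Z.
Proof.
  intros Hq Hv Hqv. apply (ndvd_of_lt q 1); [lia|].
  replace 1%Z with (v * c - (v * c - 1))%Z by ring.
  apply Z.divide_sub_r; [apply Z.divide_mul_l|]; assumption.
Qed.

Lemma dvd_affine_iff q c v b y n : (q | v * c - 1)%Z ->
  (q | y - (c * n + b))%Z <-> (q | v * (y - b) - n)%Z.
Proof.
  intros Hv. split; intros H.
  - replace (v * (y - b) - n)%Z with (v * (y - (c * n + b)) + (v * c - 1) * n)%Z by ring.
    apply Z.divide_add_r; [apply Z.divide_mul_r | apply Z.divide_mul_l]; assumption.
  - replace (y - (c * n + b))%Z with (c * (v * (y - b) - n) - (v * c - 1) * (y - b))%Z by ring.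
    apply Z.divide_sub_r; [apply Z.divide_mul_r | apply Z.divide_mul_l]; assumption.
Qed.

Lemma mod_eqb_0_iff q k : (0 < q)%Z -> (k mod q =? 0)%Z = true <-> (q | k)%Z.
Proof. intros Hq. rewrite Z.eqb_eq. apply Z.mod_divide. lia. Qed.

Definition e_q (q k : Z) : C := e (IZR k / IZR q).

Section AdditiveCharacter.
Variable q : Z.
Hypothesis q_pos : (0 < q)%Z.

Let IZR_q_neq_0 : IZR q <> 0.
Proof. apply not_0_IZR. lia. Qed.

Lemma e_q_add k l : e_q q (k + l) = (e_q q k * e_q q l)%C.
Proof. unfold e_q. rewrite <- e_add, plus_IZR. f_equal. field. exact IZR_q_neq_0. Qed.

Lemma e_q_opp k : e_q q (- k) = Cconj (e_q q k).
Proof. unfold e_q. rewrite <- e_opp, opp_IZR. f_equal. field. exact IZR_q_neq_0. Qed.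

Lemma e_q_dvd k : (q | k)%Z -> e_q q k = 1.
Proof.
  intros [j ->]. unfold e_q. rewrite mult_IZR.
  replace (IZR j * IZR q / IZR q) with (IZR j) by (field; exact IZR_q_neq_0).
  apply e_int.
Qed.

Lemma e_q_add_mul k j : e_q q (k + q * j) = e_q q k.
Proof.
  rewrite e_q_add, (e_q_dvd (q * j)) by apply Z.divide_factor_l. ring.
Qed.

Lemma e_q_ndvd k : ~ (q | k)%Z -> e_q q k <> 1.
Proof.
  intros Hk Hk1.
  assert (Hr : (0 < k mod q < q)%Z).
  { pose proof (Z.mod_pos_bound k q q_pos).
    destruct (Z.eq_dec (k mod q) 0) as [E|]; [|lia].
    exfalso. apply Hk, Z.mod_divide; lia. }
  rewrite (Z.div_mod k q) in Hk1 by lia.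
  rewrite Z.add_comm, e_q_add_mul in Hk1.
  assert (Hsin : 0 < sin (PI * (IZR (k mod q) / IZR q))).
  { assert (0 < IZR (k mod q) < IZR q) by (split; apply IZR_lt; lia).
    pose proof PI_RGT_0.
    apply sin_gt_0.
    - apply Rmult_lt_0_compat; [lra | apply Rdiv_lt_0_compat; lra].
    - rewrite <- (Rmult_1_r PI) at 2. apply Rmult_lt_compat_l; [lra|].
      apply Rlt_div_l; lra. }
  pose proof (Cmod_e_sub_1 (IZR (k mod q) / IZR q)) as E.
  fold (e_q q (k mod q)) in E. rewrite Hk1 in E.
  replace (1 - 1)%C with (RtoC 0) in E by ring.
  rewrite Cmod_0, Rabs_right in E; lra.
Qed.

End AdditiveCharacter.

Lemma in_x_range q x : In x (x_range q) <-> (0 <= x < q)%Z.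
Proof.
  unfold x_range. rewrite in_map_iff. split.
  - intros (n & <- & Hn). apply in_seq in Hn. lia.
  - intros Hx. exists (Z.to_nat x). rewrite in_seq. split; lia.
Qed.

Lemma x_range_cons q : (0 < q)%Z ->
  x_range q = (0%Z :: map Z.of_nat (seq 1 (Z.to_nat q - 1)))%list.
Proof.
  intros Hq. unfold x_range.
  replace (Z.to_nat q) with (S (Z.to_nat q - 1)) at 1 by lia. reflexivity.
Qed.

Lemma Csum_x_range_shift1 (q : Z) (f : Z -> C) :
  (0 <= q)%Z -> (forall x, f (x + q)%Z = f x) ->
  Csum (map (fun x => f (x + 1)%Z) (x_range q)) = Csum (map f (x_range q)).
Proof.
  intros Hq Hf. unfold x_range. rewrite !map_map.
  set (g := fun n => f (Z.of_nat n)).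
  assert (Hcat : Csum (map g (0%nat :: seq 1 (Z.to_nat q))) =
                 Csum (map g (seq 0 (Z.to_nat q) ++ Z.to_nat q :: nil))).
  { rewrite cons_seq, seq_S. reflexivity. }
  rewrite map_app, Csum_app, <- seq_shift, !map_cons, map_map in Hcat.
  change (Csum (?z :: ?l)) with (z + Csum l)%C in Hcat.
  change (Csum (map g nil)) with (RtoC 0) in Hcat.
  replace (g (Z.to_nat q)) with (g 0%nat) in Hcat
    by (unfold g; rewrite Z2Nat.id by lia; exact (eq_sym (Hf 0%Z))).
  rewrite (map_ext (fun x => f (Z.of_nat x + 1)%Z) (fun x => g (S x)))
    by (intros n; unfold g; f_equal; lia).
  match goal with |- ?X = ?Y => replace X with (g 0%nat + X - g 0%nat)%C by ring end.
  rewrite Hcat. ring.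
Qed.

Lemma Csum_x_range_shift (q y : Z) (f : Z -> C) :
  (0 <= q)%Z -> (forall x, f (x + q)%Z = f x) -> (0 <= y)%Z ->
  Csum (map (fun x => f (x + y)%Z) (x_range q)) = Csum (map f (x_range q)).
Proof.
  intros Hq Hf Hy. revert y Hy. apply natlike_ind.
  - f_equal. apply map_ext. intros x. f_equal. lia.
  - intros y Hy IH. rewrite <- IH.
    rewrite <- (Csum_x_range_shift1 q (fun x => f (x + y)%Z)) by
      (auto; intros x; rewrite <- (Hf (x + y)%Z); f_equal; lia).
    f_equal. apply map_ext. intros x. f_equal. lia.
Qed.

Lemma length_x_range q : (0 <= q)%Z -> INR (length (x_range q)) = IZR q.
Proof.
  intros Hq. unfold x_range. rewrite length_map, length_seq, INR_IZR_INZ, Z2Nat.id; auto.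
Qed.

Section Orthogonality.
Variable q : Z.
Hypothesis q_gt1 : (1 < q)%Z.

Lemma Csum_e_q_dvd k : (q | k)%Z ->
  Csum (map (fun x => e_q q (k * x)) (x_range q)) = IZR q.
Proof.
  intros Hk.
  rewrite (map_ext _ (fun _ => RtoC 1))
    by (intros x; apply e_q_dvd; [lia | apply Z.divide_mul_l; exact Hk]).
  rewrite Csum_map_const, length_x_range by lia. ring.
Qed.

Lemma Csum_e_q_ndvd k : ~ (q | k)%Z ->
  Csum (map (fun x => e_q q (k * x)) (x_range q)) = 0.
Proof.
  intros Hk. set (s := Csum (map (fun x => e_q q (k * x)) (x_range q))).
  assert (Hshift : (s * e_q q k)%C = s).
  { unfold s. rewrite <- Csum_map_mult_r.
    rewrite <- (Csum_x_range_shift1 q (fun x => e_q q (k * x))) by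
      (try lia; intros x; rewrite Z.mul_add_distr_l, (Z.mul_comm k q); apply e_q_add_mul; lia).
    f_equal. apply map_ext. intros x. rewrite <- e_q_add by lia. f_equal. ring. }
  assert (Hw : (e_q q k - 1)%C <> 0).
  { intros E. apply (e_q_ndvd q ltac:(lia) k Hk).
    replace (e_q q k) with (e_q q k - 1 + 1)%C by ring. rewrite E. ring. }
  replace s with ((s * e_q q k - s) / (e_q q k - 1))%C by (field; exact Hw).
  rewrite Hshift. field. exact Hw.
Qed.

Lemma indicator_e_q k :
  (RtoC (/ IZR q) * Csum (map (fun h => e_q q (k * h)) (x_range q)))%C =
  if (k mod q =? 0)%Z then 1 else 0.
Proof.
  assert (Hq : IZR q <> 0) by (apply not_0_IZR; lia).
  destruct (Z.eqb_spec (k mod q) 0) as [E | E].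
  - rewrite Csum_e_q_dvd by (apply Z.mod_divide; lia).
    rewrite <- RtoC_mult, Rinv_l by exact Hq. reflexivity.
  - rewrite Csum_e_q_ndvd by (rewrite <- Z.mod_divide; lia). ring.
Qed.

End Orthogonality.

Definition gauss_sum (q a b c : Z) : C :=
  Csum (map (fun x => e_q q (a * x * x + b * x + c)) (x_range q)).

Lemma gauss_sum_mul_conj q a b c : prime q -> q <> 2%Z -> ~ (q | a)%Z ->
  (gauss_sum q a b c * Cconj (gauss_sum q a b c))%C = IZR q.
Proof.
  intros Hp Hq2 Ha.
  assert (Hq : (1 < q)%Z) by (destruct Hp; lia).
  (* Substituting x := x + y turns [G * conj G] into
     [sum_x e_q (a x^2 + b x) * sum_y e_q (2 a x y)]; as q is odd, the inner
     sum vanishes unless x = 0. *)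
  transitivity (Csum (map (fun y => Csum (map (fun x =>
    e_q q (a * (x * x - y * y) + b * (x - y))) (x_range q))) (x_range q))).
  { unfold gauss_sum at 2. rewrite Csum_conj, map_map, <- Csum_map_mult_l.
    apply f_equal, map_ext. intros y. unfold gauss_sum. rewrite <- Csum_map_mult_r.
    apply f_equal, map_ext. intros x. rewrite <- e_q_opp, <- e_q_add by lia. f_equal. ring. }
  transitivity (Csum (map (fun y => Csum (map (fun x =>
    e_q q (a * x * x + b * x) * e_q q (2 * a * x * y)) (x_range q))) (x_range q)))%C.
  { apply f_equal, map_ext_in. intros y Hy. apply in_x_range in Hy.
    rewrite <- (Csum_x_range_shift q y); try lia.
    - apply f_equal, map_ext. intros x. rewrite <- e_q_add by lia. f_equal. ring.
    - intros x.
      rewrite <- (e_q_add_mul q ltac:(lia) (a * (x * x - y * y) + b * (x - y))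
                                         (2 * a * x + a * q + b)).
      f_equal. ring. }
  rewrite Csum_map_swap.
  rewrite (map_ext _ (fun x => e_q q (a * x * x + b * x) *
             Csum (map (fun y => e_q q (2 * a * x * y)) (x_range q))))%C
    by (intros x; apply Csum_map_mult_l).
  set (F := fun x => _).
  rewrite x_range_cons by lia. cbn [map]. change (Csum (?z :: ?l)) with (z + Csum l)%C.
  rewrite (map_ext_in _ (fun _ => RtoC 0)), Csum_map_zero.
  - unfold F. rewrite !Z.mul_0_r, Z.add_0_r.
    rewrite e_q_dvd, Csum_e_q_dvd by (lia || apply Z.divide_0_r). ring.
  - intros x Hx. apply in_map_iff in Hx as (n & <- & Hn). apply in_seq in Hn.
    assert (H2ax : ~ (q | 2 * a * Z.of_nat n)%Z).
    { apply prime_ndvd_mul; [exact Hp | | apply ndvd_of_lt; lia].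
      apply prime_ndvd_mul; [exact Hp | apply ndvd_of_lt; lia | exact Ha]. }
    unfold F. rewrite Csum_e_q_ndvd by (lia || exact H2ax). ring.
Qed.

Lemma Cmod_gauss_sum q a b c : prime q -> q <> 2%Z -> ~ (q | a)%Z ->
  Cmod (gauss_sum q a b c) = sqrt (IZR q).
Proof.
  intros Hp Hq2 Ha.
  rewrite <- (sqrt_pow2 (Cmod (gauss_sum q a b c))) by apply Cmod_ge_0.
  assert (E : RtoC (Cmod (gauss_sum q a b c) ^ 2) = RtoC (IZR q))
    by (rewrite Cmod2_conj; apply gauss_sum_mul_conj; assumption).
  injection E as E. rewrite <- E. reflexivity.
Qed.

Lemma Cmod_gauss_sum_le q a b c : prime q -> ~ (q | a)%Z ->
  Cmod (gauss_sum q a b c) <= 2 * sqrt (IZR q).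
Proof.
  intros Hp Ha.
  assert (Hq : (1 < q)%Z) by (destruct Hp; lia).
  destruct (Z.eq_dec q 2) as [-> | Hq2].
  - eapply Rle_trans; [apply Cmod_Csum_le|].
    rewrite map_map, (map_ext _ (fun _ => 1)) by (intros; apply Cmod_e).
    rewrite Rsum_map_const, length_x_range by lia.
    assert (1 <= sqrt 2) by (rewrite <- sqrt_1; apply sqrt_le_1_alt; lra). lra.
  - rewrite Cmod_gauss_sum by assumption. pose proof (sqrt_pos (IZR q)). lra.
Qed.

Lemma gauss_sum_degenerate q a b c : (1 < q)%Z -> (q | a)%Z -> ~ (q | b)%Z ->
  gauss_sum q a b c = 0.
Proof.
  intros Hq [j ->] Hb. unfold gauss_sum.
  rewrite (map_ext _ (fun x => e_q q c * e_q q (b * x)))%C.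
  - rewrite Csum_map_mult_l, Csum_e_q_ndvd by assumption. ring.
  - intros x. rewrite <- e_q_add by lia.
    replace (j * q * x * x + b * x + c)%Z with (c + b * x + q * (j * x * x))%Z by ring.
    apply e_q_add_mul. lia.
Qed.

Lemma e_geometric_telescope t s M :
  ((e t - 1) * Csum (map (fun n => e (t * INR n)) (seq s M)))%C =
  (e (t * INR (s + M)) - e (t * INR s))%C.
Proof.
  induction M as [|M IH].
  - rewrite Nat.add_0_r. simpl. ring.
  - rewrite seq_S, map_app, Csum_app, Cmult_plus_distr_l, IH.
    replace (s + S M)%nat with (S (s + M)) by lia.
    rewrite S_INR, Rmult_plus_distr_l, Rmult_1_r, e_add. simpl. ring.
Qed.

Lemma Cmod_Csum_e_seq_le t s M : sin (PI * t) <> 0 ->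
  Cmod (Csum (map (fun n => e (t * INR n)) (seq s M))) <= / Rabs (sin (PI * t)).
Proof.
  intros Hsin.
  assert (Habs : 0 < Rabs (sin (PI * t))) by (apply Rabs_pos_lt; exact Hsin).
  assert (H2 : Cmod ((e t - 1) * Csum (map (fun n => e (t * INR n)) (seq s M))) <= 2).
  { rewrite e_geometric_telescope. unfold Cminus.
    eapply Rle_trans; [apply Cmod_triangle|]. rewrite Cmod_opp, !Cmod_e. lra. }
  rewrite Cmod_mult, Cmod_e_sub_1 in H2.
  apply (Rmult_le_reg_l (2 * Rabs (sin (PI * t)))); [lra|].
  replace (2 * Rabs (sin (PI * t)) * / Rabs (sin (PI * t))) with 2 by (field; lra).
  exact H2.
Qed.

Lemma sin_ge_third t : 0 <= t <= 2 -> t / 3 <= sin t.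
Proof.
  intros Ht.
  destruct (pre_sin_bound t 0 ltac:(lra) ltac:(lra)) as [Hlb _].
  replace (sin_approx t (2 * 0 + 1)) with (t - t ^ 3 / 6) in Hlb
    by (unfold sin_approx, sin_term; simpl; field).
  nra.
Qed.

Lemma inv_sin_le t : 0 < t < PI -> / sin t <= 3 / t + 3 / (PI - t).
Proof.
  intros Ht. pose proof PI_4.
  assert (0 < 3 / t) by (apply Rdiv_lt_0_compat; lra).
  assert (0 < 3 / (PI - t)) by (apply Rdiv_lt_0_compat; lra).
  destruct (Rle_dec t (PI / 2)) as [Hle | Hgt].
  - assert (/ sin t <= 3 / t).
    { pose proof (sin_ge_third t ltac:(lra)).
      replace (3 / t) with (/ (t / 3)) by (field; lra).
      apply Rinv_le_contravar; lra. }
    lra.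
  - assert (/ sin t <= 3 / (PI - t)).
    { rewrite <- sin_PI_x. pose proof (sin_ge_third (PI - t) ltac:(lra)).
      replace (3 / (PI - t)) with (/ ((PI - t) / 3)) by (field; lra).
      apply Rinv_le_contravar; lra. }
    lra.
Qed.

Definition incomplete_sum (q h : Z) (N : R) : C :=
  Csum (map (fun n => e_q q (- h * Z.of_nat n)) (n_range N)).

Lemma Cmod_incomplete_sum_le q h N : (0 < h < q)%Z ->
  Cmod (incomplete_sum q h N) <= IZR q / IZR h + IZR q / IZR (q - h).
Proof.
  intros Hh.
  assert (Hq : 0 < IZR q) by (apply IZR_lt; lia).
  assert (Hhq : 0 < IZR h < IZR q) by (split; apply IZR_lt; lia).
  set (th := PI * (IZR h / IZR q)).
  assert (Hth : 0 < th < PI).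
  { pose proof PI_RGT_0. unfold th. split.
    - apply Rmult_lt_0_compat; [lra | apply Rdiv_lt_0_compat; lra].
    - rewrite <- (Rmult_1_r PI) at 2. apply Rmult_lt_compat_l; [lra|].
      apply Rlt_div_l; lra. }
  assert (Hsin : 0 < sin th) by (apply sin_gt_0; lra).
  unfold incomplete_sum, n_range.
  rewrite (map_ext _ (fun n => e (- (IZR h / IZR q) * INR n)))
    by (intros n; unfold e_q; rewrite mult_IZR, opp_IZR, <- INR_IZR_INZ; f_equal; field; lra).
  eapply Rle_trans; [apply Cmod_Csum_e_seq_le|].
  - replace (PI * - (IZR h / IZR q)) with (- th) by (unfold th; ring).
    rewrite sin_neg. lra.
  - replace (PI * - (IZR h / IZR q)) with (- th) by (unfold th; ring).
    rewrite sin_neg, Rabs_Ropp, Rabs_right by lra.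
    eapply Rle_trans; [apply inv_sin_le; exact Hth|].
    pose proof PI_RGT_0. pose proof PI2_3_2.
    rewrite minus_IZR.
    replace (3 / th) with (3 / PI * (IZR q / IZR h)) by (unfold th; field; lra).
    replace (3 / (PI - th)) with (3 / PI * (IZR q / (IZR q - IZR h)))
      by (unfold th; field; repeat split; try lra; nra).
    assert (0 < IZR q / IZR h) by (apply Rdiv_lt_0_compat; lra).
    assert (0 < IZR q / (IZR q - IZR h)) by (apply Rdiv_lt_0_compat; lra).
    assert (3 / PI <= 1) by (apply Rle_div_l; lra).
    nra.
Qed.

Lemma ln_le_sub_1 x : 0 < x -> ln x <= x - 1.
Proof.
  intros Hx. pose proof (exp_ineq1_le (ln x)) as H. rewrite exp_ln in H by exact Hx. lra.
Qed.

Lemma harmonic_le n : (1 <= n)%nat -> Rsum (map (fun k => / INR k) (seq 1 n)) <= 1 + ln (INR n).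
Proof.
  induction n as [|n IH]; intros Hn; [lia|].
  destruct (Nat.eq_dec n 0) as [-> | Hn0].
  - simpl. rewrite ln_1. lra.
  - rewrite seq_S, map_app, Rsum_app. cbn [map]. change (Rsum (?a :: nil)) with (a + 0).
    specialize (IH ltac:(lia)).
    assert (Hn1 : 1 <= INR n) by (apply (le_INR 1); lia).
    replace (1 + n)%nat with (S n) by lia. rewrite S_INR.
    assert (/ (INR n + 1) <= ln (INR n + 1) - ln (INR n)).
    { pose proof (ln_le_sub_1 (INR n / (INR n + 1)) ltac:(apply Rdiv_lt_0_compat; lra)) as Hl.
      rewrite ln_div in Hl by lra.
      replace (INR n / (INR n + 1) - 1) with (- / (INR n + 1)) in Hl by (field; lra). lra. }
    lra.
Qed.

Lemma Rsum_seq_reflect (f : nat -> R) n :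
  Rsum (map f (seq 1 n)) = Rsum (map (fun k => f (S n - k)%nat) (seq 1 n)).
Proof.
  induction n as [|n IH]; [reflexivity|].
  rewrite (seq_S n 1) at 1. rewrite map_app, Rsum_app, IH.
  rewrite <- cons_seq, <- (seq_shift n 1). cbn [map]. rewrite map_map.
  change (Rsum (?a :: ?l)) with (a + Rsum l).
  change (Rsum nil) with 0.
  change (fun k => f (S (S n) - S k)%nat) with (fun k => f (S n - k)%nat).
  replace (S (S n) - 1)%nat with (1 + n)%nat by lia. ring.
Qed.

Lemma Rsum_harmonic_sym_le q : (1 < q)%Z ->
  Rsum (map (fun h => IZR q / IZR h + IZR q / IZR (q - h))
            (map Z.of_nat (seq 1 (Z.to_nat q - 1))))
  <= 2 * IZR q * (1 + ln (IZR q)).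
Proof.
  intros Hq. set (n := (Z.to_nat q - 1)%nat).
  assert (Hqn : IZR q = INR (S n)) by (rewrite INR_IZR_INZ; f_equal; lia).
  assert (Hharm : Rsum (map (fun k => IZR q / IZR (Z.of_nat k)) (seq 1 n))
                  <= IZR q * (1 + ln (IZR q))).
  { rewrite (map_ext _ (fun k => IZR q * / INR k))
      by (intros k; rewrite INR_IZR_INZ; reflexivity).
    rewrite Rsum_map_mult_l.
    apply Rmult_le_compat_l; [rewrite Hqn; apply pos_INR|].
    eapply Rle_trans; [apply harmonic_le; lia|].
    rewrite Hqn. apply Rplus_le_compat_l, ln_le; [apply (lt_INR 0); lia | apply le_INR; lia]. }
  rewrite map_map, Rsum_map_add.
  rewrite (Rsum_seq_reflect (fun k => IZR q / IZR (q - Z.of_nat k))).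
  rewrite (map_ext_in (fun k => IZR q / IZR (q - Z.of_nat (S n - k)))
                      (fun k => IZR q / IZR (Z.of_nat k)))
    by (intros k Hk; apply in_seq in Hk; do 2 f_equal; lia).
  lra.
Qed.

Lemma Cmod_completed_sum_le q (s g : Z -> C) : (1 < q)%Z -> g 0%Z = 0 ->
  (forall h, (0 < h < q)%Z -> Cmod (s h) <= IZR q / IZR h + IZR q / IZR (q - h)) ->
  (forall h, (0 < h < q)%Z -> Cmod (g h) <= 2 * sqrt (IZR q)) ->
  Cmod (RtoC (/ IZR q) * Csum (map (fun h => s h * g h) (x_range q)))%C
  <= 4 * sqrt (IZR q) * (1 + ln (IZR q)).
Proof.
  intros Hq Hg0 Hs Hg.
  assert (Hqpos : 0 < IZR q) by (apply IZR_lt; lia).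
  assert (Hinv : 0 < / IZR q) by (apply Rinv_0_lt_compat; lra).
  pose proof (sqrt_pos (IZR q)) as Hsqrt.
  rewrite Cmod_mult, Cmod_R, Rabs_right by lra.
  rewrite x_range_cons by lia. cbn [map]. change (Csum (?z :: ?l)) with (z + Csum l)%C.
  rewrite Hg0, Cmult_0_r, Cplus_0_l.
  eapply Rle_trans; [apply Rmult_le_compat_l; [lra | apply Cmod_Csum_le]|].
  rewrite map_map.
  eapply Rle_trans.
  { apply Rmult_le_compat_l; [lra|].
    apply (Rsum_map_le _ (fun h => 2 * sqrt (IZR q) * (IZR q / IZR h + IZR q / IZR (q - h)))).
    intros h Hh. apply in_map_iff in Hh as (k & <- & Hk). apply in_seq in Hk.
    rewrite Cmod_mult, Rmult_comm.
    apply Rmult_le_compat; [apply Cmod_ge_0 | apply Cmod_ge_0 | apply Hg; lia | apply Hs; lia]. }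
  rewrite Rsum_map_mult_l.
  pose proof (Rsum_harmonic_sym_le q Hq).
  replace (4 * sqrt (IZR q) * (1 + ln (IZR q)))
    with (/ IZR q * (2 * sqrt (IZR q) * (2 * IZR q * (1 + ln (IZR q))))) by (field; lra).
  apply Rmult_le_compat_l; [lra|]. apply Rmult_le_compat_l; lra.
Qed.

Lemma U_completion q a b m lam v N : (1 < q)%Z -> (q | v * (a * m) - 1)%Z ->
  U q a b m lam N =
  (RtoC (/ IZR q) * Csum (map (fun h =>
     incomplete_sum q h N * gauss_sum q (h * v) lam (- (h * v * b))) (x_range q)))%C.
Proof.
  intros Hq Hv.
  transitivity (RtoC (/ IZR q) * Csum (map (fun n => Csum (map (fun x =>
    Csum (map (fun h => e_q q (- h * Z.of_nat n) * e_q q (h * v * x * x + lam * x + - (h * v * b)))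
      (x_range q))) (x_range q))) (n_range N)))%C.
  { unfold U. rewrite <- Csum_map_mult_l. apply f_equal, map_ext. intros n.
    rewrite Csum_map_filter, <- Csum_map_mult_l. apply f_equal, map_ext. intros x.
    replace (e (IZR lam * IZR x / IZR q)) with (e_q q (lam * x))
      by (unfold e_q; rewrite mult_IZR; reflexivity).
    assert (Hind : ((x * x - (a * m * Z.of_nat n + b)) mod q =? 0)%Z =
                   ((v * (x * x - b) - Z.of_nat n) mod q =? 0)%Z).
    { apply Bool.eq_iff_eq_true. rewrite !mod_eqb_0_iff by lia. apply dvd_affine_iff, Hv. }
    rewrite Hind.
    transitivity (RtoC (/ IZR q) * Csum (map (fun h =>
      e_q q ((v * (x * x - b) - Z.of_nat n) * h)) (x_range q)) * e_q q (lam * x))%C.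
    { rewrite indicator_e_q by lia. destruct ((v * (x * x - b) - Z.of_nat n) mod q =? 0)%Z; ring. }
    rewrite <- Cmult_assoc, <- Csum_map_mult_r. do 2 f_equal. apply map_ext. intros h.
    rewrite <- !e_q_add by lia. f_equal. ring. }
  f_equal. unfold incomplete_sum, gauss_sum. symmetry.
  erewrite map_ext by (intros h; apply Csum_map_mult_Csum).
  rewrite Csum_map_swap. apply f_equal, map_ext. intros n. apply Csum_map_swap.
Qed.

Theorem theorem2p1 :
  exists c : R, 0 < c /\
    forall (q : Z), prime q ->
    forall (N : R), 1 <= N ->
    forall (a b m lam : Z), Z.gcd (a * m * lam) q = 1%Z ->
      Cmod (U q a b m lam N) <= c * sqrt (IZR q) * ln (IZR q).
Proof.
  exists 12. split; [lra|].
  intros q Hp N HN a b m lam Hg.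
  assert (Hq : (1 < q)%Z) by (destruct Hp; lia).
  assert (Hlam : ~ (q | lam)%Z)
    by (apply (ndvd_of_coprime q (a * m * lam)); auto using Z.divide_factor_r).
  assert (Ham : ~ (q | a * m)%Z)
    by (apply (ndvd_of_coprime q (a * m * lam)); auto using Z.divide_factor_l).
  destruct (exists_inverse_mod q (a * m) Hp Ham) as [v Hv].
  rewrite (U_completion q a b m lam v N Hq Hv).
  eapply Rle_trans.
  { apply Cmod_completed_sum_le; [exact Hq | | |].
    - apply gauss_sum_degenerate; [exact Hq | rewrite Z.mul_0_l; apply Z.divide_0_r | exact Hlam].
    - intros h Hh. apply Cmod_incomplete_sum_le, Hh.
    - intros h Hh. apply Cmod_gauss_sum_le; [exact Hp|].
      apply prime_ndvd_mul; [exact Hp | apply ndvd_of_lt; lia |].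
      apply (inverse_mod_ndvd q (a * m)); assumption. }
  assert (Hln : / 2 < ln (IZR q)).
  { eapply Rlt_le_trans; [apply ln_lt_2 | apply ln_le; [lra | apply IZR_le; lia]]. }
  pose proof (sqrt_pos (IZR q)). nra.
Qed.
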